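(* Let $b\in\mathbb{R}$. For $X=(y^1,y^2,y^3,x^1,x^2,x^3,z^1,z^2,z^3)^T\in\mathbb{C}^9$ write $y^\pm=y^1\pm\mathrm{i}y^2$, $x^\pm=x^1\pm\mathrm{i}x^2$, $z^\pm=z^1\pm\mathrm{i}z^2$, and $$\mathcal{L}_X(\lambda)=\frac{\mathrm{i}}{2}\begin{pmatrix}u(\lambda)&v(\lambda)\\ w(\lambda)&-u(\lambda)\end{pmatrix},\quad u=b+\frac{y^3}{\lambda}+\frac{x^3}{\lambda^2}+\frac{z^3}{\lambda^3},\ v=\frac{y^-}{\lambda}+\frac{x^-}{\lambda^2}+\frac{z^-}{\lambda^3},\ w=\frac{y^+}{\lambda}+\frac{x^+}{\lambda^2}+\frac{z^+}{\lambda^3}.$$ Let $\eta\in\mathbb{C}$, $\eta_1=\eta$, $\eta_2=\bar\eta$, and let $\mu_1,\mu_2\in\mathbb{C}$ satisfy $4\mu_j^2+u(\eta_j)^2+v(\eta_j)w(\eta_j)=0$ ($j=1,2$). Define (whenever the denominators are nonzero) $$s=\frac{u(\eta_1)-\mu_1}{v(\eta_1)},\qquad t=\frac{(\eta_1-\eta_2)(u(\eta_1)+\mu_1)(u(\eta_2)-\mu_2)}{(u(\eta_1)+\mu_1)w(\eta_2)-(u(\eta_2)-\mu_2)w(\eta_1)},$$ $$\mathcal{M}(\lambda)=\begin{pmatrix}\lambda-\eta_1+st& t\\ -s^2t+(\eta_1-\eta_2)s&\lambda-\eta_2-st\end{pmatrix}.$$ Suppose $\breve X\in\mathbb{C}^9$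 is such that $\mathcal{M}(\lambda)\mathcal{L}_X(\lambda)=\mathcal{L}_{\breve X}(\lambda)\mathcal{M}(\lambda)$ for all $\lambda$ (this defines the two-point Bäcklund transformation $X\mapsto\breve X$). Then $$\breve X=\Phi\,X+X_0,\qquad \Phi=\begin{pmatrix}\mathbb{1}_3&0&0\\ A&\mathbb{1}_3&0\\ B&A&\mathbb{1}_3\end{pmatrix},$$ where $A,B$ are $3\times3$ matrices depending only on $s,t,\eta$, and $X_0\in\mathbb{C}^9$ is a vector depending only on $s,t,\eta$ and $b$ (here $\mathbb 1_3$ is the $3\times3$ identity and $0$ the $3\times3$ zero matrix).
   Context: $\mathrm{i}$ is the imaginary unit and $\bar\eta$ the complex conjugate of $\eta$. The quantities $s,t$ themselves depend on $X$, so the map $X\mapsto\breve X$ is nonlinear; the claim concerns the dependence of $\breve X$ on $X$ with $s,t,\eta$ regarded as parameters. *)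

From HB Require Import structures.
From mathcomp Require Import all_boot all_order all_algebra.
From mathcomp Require Import reals complex.
Set Implicit Arguments. Unset Strict Implicit. Unset Printing Implicit Defensive.
Import Order.TTheory GRing.Theory Num.Theory.
Local Open Scope ring_scope.
Local Open Scope complex_scope.

Section Defs.
Variable R : realType.
Local Notation C := R[i].

(* X = (y1,y2,y3,x1,x2,x3,z1,z2,z3)^T; crd X k is the (0-based) k-th entry *)
Definition crd (X : 'cV[C]_9) (k : nat) : C := X (inord k) 0.

(* y^3, x^3, z^3 are entries 2, 5, 8; y^{+-} = y1 +- i y2 etc. *)
Definition uL (b : R) (X : 'cV[C]_9) (l : C) : C :=
  b%:C + crd X 2 / l + crd X 5 / l ^+ 2 + crd X 8 / l ^+ 3.
Definition vL (X : 'cV[C]_9) (l : C) : C :=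
  (crd X 0 - 'i * crd X 1) / l + (crd X 3 - 'i * crd X 4) / l ^+ 2
  + (crd X 6 - 'i * crd X 7) / l ^+ 3.
Definition wL (X : 'cV[C]_9) (l : C) : C :=
  (crd X 0 + 'i * crd X 1) / l + (crd X 3 + 'i * crd X 4) / l ^+ 2
  + (crd X 6 + 'i * crd X 7) / l ^+ 3.

Definition LaxL (b : R) (X : 'cV[C]_9) (l : C) : 'M[C]_2 :=
  ('i / 2) *: \matrix_(i < 2, j < 2)
     (if i == 0 :> nat then (if j == 0 :> nat then uL b X l else vL X l)
      else (if j == 0 :> nat then wL X l else - uL b X l)).

Definition s_of (b : R) (X : 'cV[C]_9) (eta1 mu1 : C) : C :=
  (uL b X eta1 - mu1) / vL X eta1.
Definition t_den (b : R) (X : 'cV[C]_9) (eta1 eta2 mu1 mu2 : C) : C :=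
  (uL b X eta1 + mu1) * wL X eta2 - (uL b X eta2 - mu2) * wL X eta1.
Definition t_of (b : R) (X : 'cV[C]_9) (eta1 eta2 mu1 mu2 : C) : C :=
  (eta1 - eta2) * (uL b X eta1 + mu1) * (uL b X eta2 - mu2)
  / t_den b X eta1 eta2 mu1 mu2.

Definition Mdress (eta1 eta2 s t l : C) : 'M[C]_2 :=
  \matrix_(i < 2, j < 2)
     (if i == 0 :> nat then (if j == 0 :> nat then l - eta1 + s * t else t)
      else (if j == 0 :> nat then - s ^+ 2 * t + (eta1 - eta2) * s
            else l - eta2 - s * t)).

(* Phi = [[1,0,0],[A,1,0],[B,A,1]] as a 9x9 matrix, 3x3 blocks *)
Definition Phi (A B : 'M[C]_3) : 'M[C]_9 :=
  \matrix_(i < 9, j < 9)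
    (let bi := (i %/ 3)%N in let bj := (j %/ 3)%N in
     let ri : 'I_3 := inord (i %% 3) in let rj : 'I_3 := inord (j %% 3) in
     if bi == bj then (ri == rj)%:R
     else if bi == bj.+1 then A ri rj
     else if bi == bj.+2 then B ri rj
     else 0).

End Defs.

From HB Require Import structures.
From mathcomp Require Import all_boot all_order all_algebra.
From mathcomp Require Import reals complex ring.
Set Implicit Arguments. Unset Strict Implicit. Unset Printing Implicit Defensive.
Import Order.TTheory GRing.Theory Num.Theory.
Local Open Scope ring_scope.

(* The dressing matrix is M(l) = l + N with N = M(0), and L_X(l) is (i/2) times
   the Laurent polynomial b sigma3 + Y/l + X/l^2 + Z/l^3, where Y, X, Z are the
   traceless matrices whose coordinates are the three blocks (y, x, z) of X.
   Comparing the coefficients of l^0, l^-1, l^-2 in M L_X = L_Xb M gives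
     Yb = Y + [N, b sigma3],
     Xb = X + [N, Y] - [N, b sigma3] N,
     Zb = Z + [N, X] - [N, Y] N + [N, b sigma3] N^2,
   an affine map that is block unitriangular in (Y, X, Z); its linear parts
   P |-> [N, P] and P |-> -[N, P] N depend only on N, i.e. on s, t and eta. *)

Lemma coef_eq0_of_vanishing (F : numDomainType) (k : nat) (c : nat -> F) :
  (forall l : F, l != 0 -> \sum_(i < k) c i * l ^+ i = 0) ->
  forall i, (i < k)%N -> c i = 0.
Proof.
move=> vanish i ltik; pose p := \poly_(i < k) c i.
have -> : c i = p`_i by rewrite coef_poly ltik.
suff -> : p = 0 by rewrite coef0.
pose rs := [seq m.+1%:R : F | m <- iota 0 k].
apply: (@roots_geq_poly_eq0 _ p rs); last by rewrite size_map size_iota size_poly.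
- by apply/allP => _ /mapP[m _ ->]; rewrite /root horner_poly vanish ?pnatr_eq0.
- by rewrite map_inj_uniq ?iota_uniq // => m1 m2 /eqP; rewrite eqr_nat => /eqP [].
Qed.

Section Dressing.
Variables (F : numFieldType) (n : nat).
Implicit Types N P Y X Z : 'M[F]_n.

Definition ad N P := N *m P - P *m N.

Fact ad_is_linear N : linear (ad N).
Proof.
by move=> a P Q; rewrite /ad mulmxDr mulmxDl -scalemxAl -scalemxAr scalerBr addrACA opprD.
Qed.
HB.instance Definition _ N :=
  GRing.isLinear.Build F 'M[F]_n 'M[F]_n _ (ad N) (ad_is_linear N).

Definition laurent3 P Y X Z (l : F) := P + l^-1 *: Y + l^-2 *: X + l^-3 *: Z.

Lemma dressing_recursion N P Y X Z Yb Xb Zb :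
  (forall l, l != 0 ->
     (l%:M + N) *m laurent3 P Y X Z l = laurent3 P Yb Xb Zb l *m (l%:M + N)) ->
  [/\ Yb = Y + ad N P, Xb = X + ad N Y - ad N P *m N &
      Zb = Z + ad N X - ad N Y *m N + ad N P *m N *m N].
Proof.
move=> intertwine.
pose coefs := [:: N *m Z - Zb *m N; N *m X - Xb *m N + Z - Zb;
                  N *m Y - Yb *m N + X - Xb; ad N P + Y - Yb].
have cubic_vanishes l : l != 0 -> \sum_(i < 4) l ^+ i *: coefs`_i = 0.
  move=> l0; transitivity (l ^+ 3 *:
    ((l%:M + N) *m laurent3 P Y X Z l - laurent3 P Yb Xb Zb l *m (l%:M + N))).
    rewrite /laurent3 /ad !big_ord_recr big_ord0 /=.
    rewrite !mulmxDr !mulmxDl !mul_scalar_mx !mul_mx_scalar -!scalemxAl -!scalemxAr.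
    by apply/matrixP => r s; rewrite !mxE; field.
  by rewrite intertwine // subrr scaler0.
have coefs0 i : (i < 4)%N -> coefs`_i = 0.
  move=> lti; apply/matrixP => r s; rewrite mxE.
  apply: (@coef_eq0_of_vanishing F 4 (fun i => coefs`_i r s)) => // l l0.
  transitivity ((\sum_(i < 4) l ^+ i *: coefs`_i) r s); last by rewrite cubic_vanishes ?mxE.
  by rewrite summxE; apply: eq_bigr => m _; rewrite mxE mulrC.
have /eqP := coefs0 3%N isT; rewrite subr_eq0 => /eqP eY.
have /eqP := coefs0 2%N isT; rewrite subr_eq0 => /eqP eX.
have /eqP := coefs0 1%N isT; rewrite subr_eq0 => /eqP eZ.
subst Yb Xb Zb; rewrite /ad.
by split; apply/matrixP => r s; rewrite ?(mulmxDl, mulmxBl, mulNmx) !mxE; ring.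
Qed.

End Dressing.

Section SL2Coordinates.
Variables (F : fieldType) (j : F).
Hypothesis j2_neq0 : 2 * j != 0.

Let two_neq0 : 2 != 0 :> F.
Proof. by move: j2_neq0; rewrite mulf_eq0 negb_or => /andP[]. Qed.

Let j_neq0 : j != 0.
Proof. by move: j2_neq0; rewrite mulf_eq0 negb_or => /andP[]. Qed.

(* With j = i, the coefficient of l^-1 in L_X is (i/2) sl2 (y1, y2, y3). *)
Definition sl2 (v : 'cV[F]_3) : 'M[F]_2 :=
  let a := v (inord 0) 0 in let b := v (inord 1) 0 in let c := v (inord 2) 0 in
  \matrix_(r < 2, s < 2)
    (if r == 0 :> nat then (if s == 0 :> nat then c else a - j * b)
     else (if s == 0 :> nat then a + j * b else - c)).

Definition sl2_coord (P : 'M[F]_2) : 'cV[F]_3 :=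
  let p (r s : nat) := P (inord r) (inord s) in
  \col_(k < 3)
    (if k == 0 :> nat then (p 1 0 + p 0 1) / 2
     else if k == 1 :> nat then (p 1 0 - p 0 1) / (2 * j) else p 0 0).

Fact sl2_is_linear : linear sl2.
Proof.
move=> a v w; apply/matrixP => r s; rewrite !mxE.
by case: ifP => _; case: ifP => _; ring.
Qed.
HB.instance Definition _ := GRing.isLinear.Build F 'cV[F]_3 'M[F]_2 _ sl2 sl2_is_linear.

Fact sl2_coord_is_linear : linear sl2_coord.
Proof.
move=> a P Q; apply/matrixP => k c; rewrite !mxE.
by case: ifP => _; [|case: ifP => _]; field; rewrite ?j_neq0 ?two_neq0.
Qed.
HB.instance Definition _ :=
  GRing.isLinear.Build F 'M[F]_2 'cV[F]_3 _ sl2_coord sl2_coord_is_linear.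

Lemma sl2K : cancel sl2 sl2_coord.
Proof.
move=> v; apply/matrixP => k c; rewrite ord1 -[k in RHS]inord_val !mxE.
by case: k => [[|[|[|//]]] ?]; rewrite /= !inordK //=; field; rewrite ?j_neq0 ?two_neq0.
Qed.

Definition sl2_mx (f : 'M[F]_2 -> 'M[F]_2) : 'M[F]_3 :=
  \matrix_(k, l) sl2_coord (f (sl2 (delta_mx l 0))) k 0.

Lemma sl2_mxE (f : {linear 'M[F]_2 -> 'M[F]_2}) v :
  sl2_mx f *m v = sl2_coord (f (sl2 v)).
Proof.
rewrite {2}[v]matrix_sum_delta !linear_sum; apply/matrixP => k c.
rewrite ord1 !mxE summxE; apply: eq_bigr => l _.
by rewrite big_ord1 !linearZ ord1 !mxE mulrC.
Qed.

End SL2Coordinates.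

Local Open Scope complex_scope.

Section Baecklund.
Context {R : realType}.
Local Notation C := R[i].

Let i2_neq0 : 2 * 'i != 0 :> C.
Proof. by rewrite mulf_neq0 ?pnatr_eq0 ?neq0Ci. Qed.

Definition ypart (X : 'cV[C]_9) : 'cV[C]_3 := @usubmx C 3 6 1 X.
Definition xpart (X : 'cV[C]_9) : 'cV[C]_3 := @usubmx C 3 3 1 (@dsubmx C 3 6 1 X).
Definition zpart (X : 'cV[C]_9) : 'cV[C]_3 := @dsubmx C 3 3 1 (@dsubmx C 3 6 1 X).

Lemma cV9_blocks (X : 'cV[C]_9) : X = col_mx (ypart X) (col_mx (xpart X) (zpart X)).
Proof. by rewrite /ypart /xpart /zpart !vsubmxK. Qed.

Lemma crdE (X : 'cV[C]_9) (k : 'I_9) : X k 0 = crd X k.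
Proof. by rewrite /crd inord_val. Qed.

Definition sigma3 : 'M[C]_2 := diag_mx (\row_(r < 2) (-1) ^+ r).

Lemma LaxL_laurent3 b X l : LaxL b X l = ('i / 2) *:
  laurent3 (b%:C *: sigma3) (sl2 'i (ypart X)) (sl2 'i (xpart X)) (sl2 'i (zpart X)) l.
Proof.
apply/matrixP => r s; rewrite !mxE !crdE /= !inordK //.
by case: r s => [[|[|//]] ?] [[|[|//]] ?]; rewrite /= /uL /vL /wL /addn /=; ring.
Qed.

Lemma Mdress_shift (e1 e2 s t l : C) : Mdress e1 e2 s t l = l%:M + Mdress e1 e2 s t 0.
Proof.
apply/matrixP => r c; rewrite !mxE.
by case: r c => [[|[|//]] ?] [[|[|//]] ?] /=; ring.
Qed.

Lemma Phi_block (A B : 'M[C]_3) :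
  Phi A B = block_mx 1%:M 0 (col_mx A B) (block_mx 1%:M 0 A 1%:M).
Proof.
have q0 (r : 'I_3) : (r %/ 3 = 0)%N by rewrite divn_small.
have q1 (r : 'I_3) : ((3 + r) %/ 3 = 1)%N by rewrite divnDl // divnn q0.
have q2 (r : 'I_3) : ((3 + (3 + r)) %/ 3 = 2)%N by rewrite divnDl // divnn q1.
apply/matrixP => i k.
case: (@split_ordP 3 6 i) => [r|i'] ->; [|case: (@split_ordP 3 3 i') => [r|r] ->];
case: (@split_ordP 3 6 k) => [c|k'] ->; try case: (@split_ordP 3 3 k') => [c|c] ->;
rewrite [LHS]mxE /= ?q0 ?q1 ?q2 ?modnDl ?modnDl !modn_small // !inord_val;
by do ?rewrite (mxE, unsplitK (inl _ _), unsplitK (inr _ _)) /=.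
Qed.

Lemma Phi_mul_blocks (A B : 'M[C]_3) (y x z : 'cV[C]_3) :
  Phi A B *m (col_mx y (col_mx x z) : 'cV_9) =
  col_mx y (col_mx (A *m y + x) (B *m y + A *m x + z)) :> 'cV_(3 + (3 + 3)).
Proof.
rewrite Phi_block (@mul_block_col _ 3 (3 + 3) 3 (3 + 3)) mul_block_col.
by rewrite !mul_col_mx !mul1mx !mul0mx !addr0 !add_col_mx addrA.
Qed.

Definition dressN (s t eta : C) : 'M[C]_2 := Mdress eta eta^* s t 0.

Definition Amx (s t eta : C) : 'M[C]_3 := sl2_mx 'i (ad (dressN s t eta)).

Definition Bmx (s t eta : C) : 'M[C]_3 :=
  - sl2_mx 'i (mulmxr (dressN s t eta) \o ad (dressN s t eta)).

Definition X0vec (s t eta : C) (b : R) : 'cV[C]_9 :=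
  let N := dressN s t eta in let D := ad N (b%:C *: sigma3) in
  col_mx (sl2_coord 'i D) (col_mx (- sl2_coord 'i (D *m N)) (sl2_coord 'i (D *m N *m N))).

Lemma dressing_blocks (b : R) (eta s t : C) (X Xb : 'cV[C]_9) :
  (forall l, l != 0 ->
     Mdress eta eta^* s t l *m LaxL b X l = LaxL b Xb l *m Mdress eta eta^* s t l) ->
  let N := dressN s t eta in let D := ad N (b%:C *: sigma3) in
  [/\ ypart Xb = ypart X + sl2_coord 'i D,
      xpart Xb = Amx s t eta *m ypart X + xpart X - sl2_coord 'i (D *m N) &
      zpart Xb = Bmx s t eta *m ypart X + Amx s t eta *m xpart X + zpart X
                 + sl2_coord 'i (D *m N *m N)].
Proof.
move=> intertwine N D.
pose L (Y : 'cV[C]_9) := laurent3 (b%:C *: sigma3)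
  (sl2 'i (ypart Y)) (sl2 'i (xpart Y)) (sl2 'i (zpart Y)).
have laurent_intertwine l : l != 0 -> (l%:M + N) *m L X l = L Xb l *m (l%:M + N).
  move=> l0; apply: (@scalerI _ _ ('i / 2)).
    by rewrite mulf_neq0 ?invr_eq0 ?pnatr_eq0 ?neq0Ci.
  by rewrite scalemxAr scalemxAl -!LaxL_laurent3 -Mdress_shift intertwine.
have [eY eX eZ] := dressing_recursion laurent_intertwine.
split.
- by rewrite -[LHS](sl2K i2_neq0) eY linearD /= sl2K.
- rewrite -[LHS](sl2K i2_neq0) eX 2!linearD linearN /= !sl2K // sl2_mxE //=.
  by rewrite [xpart X + _]addrC.
- rewrite -[LHS](sl2K i2_neq0) eZ 3!linearD linearN /= !sl2K //.
  rewrite /Bmx mulNmx !sl2_mxE //= -/N -/D.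
  by congr (_ + _); rewrite addrC [zpart X + _]addrC addrA.
Qed.

End Baecklund.

Theorem proposition7 (R : realType) :
  exists (A B : R[i] -> R[i] -> R[i] -> 'M[R[i]]_3)
         (X0 : R[i] -> R[i] -> R[i] -> R -> 'cV[R[i]]_9),
  forall (b : R) (eta mu1 mu2 : R[i]) (X Xb : 'cV[R[i]]_9),
    let eta1 := eta in
    let eta2 := eta^* in
    eta != 0 ->
    4 * mu1 ^+ 2 + uL b X eta1 ^+ 2 + vL X eta1 * wL X eta1 = 0 ->
    4 * mu2 ^+ 2 + uL b X eta2 ^+ 2 + vL X eta2 * wL X eta2 = 0 ->
    vL X eta1 != 0 ->
    t_den b X eta1 eta2 mu1 mu2 != 0 ->
    let s := s_of b X eta1 mu1 in
    let t := t_of b X eta1 eta2 mu1 mu2 in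
    (forall l : R[i], l != 0 ->
       Mdress eta1 eta2 s t l *m LaxL b X l = LaxL b Xb l *m Mdress eta1 eta2 s t l) ->
    Xb = Phi (A s t eta) (B s t eta) *m X + X0 s t eta b.
Proof.
exists Amx, Bmx, X0vec.
move=> b eta mu1 mu2 X Xb e1 e2 _ _ _ _ _ s t; clearbody s t.
rewrite {}/e1 {}/e2 => /dressing_blocks[ey ex ez].
rewrite (cV9_blocks Xb) (cV9_blocks X) Phi_mul_blocks /X0vec.
by rewrite (@add_col_mx _ 3 (3 + 3)) add_col_mx ey ex ez.
Qed.
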